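(* Let $X$ be a set of pointed Kripke models, $\Lambda$ a normal modal logic sound with respect to $X$ which is compact, and $D\subseteq\boldsymbol{\mathcal{L}}_{\Lambda}$ a descriptor such that $X$ is saturated with respect to $D$. Then the space $(X_D,\mathcal{T}_D)$ is compact.
   Context: Signature: countable non-empty sets $\Phi$, $\mathcal{I}$; $\mathcal{L}$: $\varphi ::= \top\mid p\mid\neg\varphi\mid\varphi\wedge\varphi\mid\Box_i\varphi$ on pointed Kripke models, standard semantics. $\boldsymbol{\varphi}$: formulas $\Lambda$-provably equivalent to $\varphi$; $\boldsymbol{\mathcal{L}}_{\Lambda}=\{\boldsymbol{\varphi}\}$. $\Lambda$ is compact if a set $A\subseteq\mathcal{L}$ is $\Lambda$-consistent iff every finite subset of $A$ is. A descriptor is $D\subseteq\boldsymbol{\mathcal{L}}_{\Lambda}$; $\boldsymbol{x}_D=\{y\in X:\forall\boldsymbol{\varphi}\in D,\ y\models\varphi\iff x\models\varphi\}$, $X_D=\{\boldsymbol{x}_D:x\in X\}$. $\mathcal{T}_D$ is the topology on $X_D$ generated by the subbasis $\{\boldsymbol{x}:x\models\varphi\}$, $\{\boldsymbol{x}:x\models\neg\varphi\}$, $\boldsymbol{\varphi}\in D$. $X$ is saturated with respect to $D$ if for all $Y,Y'\subseteq D$ such that $B=\{\varphi:\boldsymbol{\varphi}\in Y\}\cup\{\neg\varphi:\boldsymbol{\varphi}\in Y'\}$ is $\Lambda$-consistent, there is $x\in X$ with $x\models\psi$ for all $\psi\in B$. *)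

From Stdlib Require Import List.
Import ListNotations.




Definition countable (T : Type) : Prop :=
  exists f : T -> nat, forall x y, f x = f y -> x = y.

Inductive form (P I : Type) : Type :=
| Top : form P I
| Var : P -> form P I
| Neg : form P I -> form P I
| And : form P I -> form P I -> form P I
| Box : I -> form P I -> form P I.

Arguments Top {P I}.
Arguments Var {P I}.
Arguments Neg {P I}.
Arguments And {P I}.
Arguments Box {P I}.

Section Lang.
Variables P I : Type.
Local Notation form := (form P I).

Definition Imp (a b : form) : form := Neg (And a (Neg b)).
Definition Iff (a b : form) : form := And (Imp a b) (Imp b a).

Fixpoint conj_list (l : list form) : form :=
  match l with
  | [] => Top
  | a :: l' => And a (conj_list l')
  end.

Record kmodel : Type := KModel {
  world : Type;
  rel : I -> world -> world -> Prop;
  val : P -> world -> Prop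
}.

Record pointed : Type := Pointed {
  pmodel : kmodel;
  pworld : world pmodel
}.

Fixpoint sat (M : kmodel) (w : world M) (f : form) : Prop :=
  match f with
  | Top => True
  | Var p => val M p w
  | Neg g => ~ sat M w g
  | And g h => sat M w g /\ sat M w h
  | Box i g => forall v, rel M i w v -> sat M v g
  end.

Definition psat (x : pointed) (f : form) : Prop := sat (pmodel x) (pworld x) f.

(** Propositional tautologies: true under every Boolean valuation that
    treats propositional variables and boxed formulas as atoms
    (i.e. substitution instances of classical tautologies). *)
Fixpoint peval (v : form -> bool) (f : form) : bool :=
  match f with
  | Top => true
  | Var p => v (Var p)
  | Neg g => negb (peval v g)
  | And g h => andb (peval v g) (peval v h)
  | Box i g => v (Box i g)
  end.

Definition tautology (f : form) : Prop := forall v, peval v f = true.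

Fixpoint subst (s : P -> form) (f : form) : form :=
  match f with
  | Top => Top
  | Var p => s p
  | Neg g => Neg (subst s g)
  | And g h => And (subst s g) (subst s h)
  | Box i g => Box i (subst s g)
  end.

Definition normal_logic (L : form -> Prop) : Prop :=
  (forall f, tautology f -> L f) /\
  (forall i a b, L (Imp (Box i (Imp a b)) (Imp (Box i a) (Box i b)))) /\
  (forall a b, L (Imp a b) -> L a -> L b) /\
  (forall i a, L a -> L (Box i a)) /\
  (forall s a, L a -> L (subst s a)).

Definition sound_wrt (L : form -> Prop) (X : pointed -> Prop) : Prop :=
  forall f, L f -> forall x, X x -> psat x f.

Definition consistent (L : form -> Prop) (A : form -> Prop) : Prop :=
  ~ exists l : list form, (forall a, In a l -> A a) /\ L (Neg (conj_list l)).

Definition finite_set (A : form -> Prop) : Prop :=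
  exists l : list form, forall a, A a <-> In a l.

Definition compact_logic (L : form -> Prop) : Prop :=
  forall A : form -> Prop,
    consistent L A <->
    (forall B : form -> Prop, (forall b, B b -> A b) -> finite_set B -> consistent L B).

(** Equivalence classes [phi] of L-provably equivalent formulas; the
    elements of bold-L_L. A descriptor is a set of such classes. *)
Definition eqclass (L : form -> Prop) (f : form) : form -> Prop :=
  fun g => L (Iff f g).

Definition is_descriptor (L : form -> Prop) (D : (form -> Prop) -> Prop) : Prop :=
  forall c, D c -> exists f, c = eqclass L f.

Definition xD (L : form -> Prop) (X : pointed -> Prop)
  (D : (form -> Prop) -> Prop) (x : pointed) : pointed -> Prop :=
  fun y => X y /\ forall f, D (eqclass L f) -> (psat y f <-> psat x f).

Definition XD (L : form -> Prop) (X : pointed -> Prop)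
  (D : (form -> Prop) -> Prop) : (pointed -> Prop) -> Prop :=
  fun S => exists x, X x /\ S = xD L X D x.

Definition subbasis_D (L : form -> Prop) (X : pointed -> Prop)
  (D : (form -> Prop) -> Prop)
  : ((pointed -> Prop) -> Prop) -> Prop :=
  fun U => exists f, D (eqclass L f) /\
    (U = (fun S => exists x, X x /\ S = xD L X D x /\ psat x f) \/
     U = (fun S => exists x, X x /\ S = xD L X D x /\ psat x (Neg f))).

End Lang.

Arguments Imp {P I}. Arguments Iff {P I}. Arguments conj_list {P I}.
Arguments sat {P I}. Arguments psat {P I}. Arguments peval {P I}.
Arguments tautology {P I}. Arguments subst {P I}. Arguments normal_logic {P I}.
Arguments sound_wrt {P I}. Arguments consistent {P I}. Arguments finite_set {P I}.
Arguments compact_logic {P I}. Arguments eqclass {P I}. Arguments is_descriptor {P I}.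
Arguments xD {P I}. Arguments XD {P I}. Arguments subbasis_D {P I}.
Arguments world {P I}. Arguments rel {P I}. Arguments val {P I}.
Arguments pmodel {P I}. Arguments pworld {P I}.

Definition generated_open {T : Type} (space : T -> Prop)
  (sub : (T -> Prop) -> Prop) (U : T -> Prop) : Prop :=
  (forall t, U t -> space t) /\
  forall t, U t -> exists l : list (T -> Prop),
    (forall B, In B l -> sub B) /\ (forall B, In B l -> B t) /\
    (forall s, space s -> (forall B, In B l -> B s) -> U s).

Definition compact_space {T : Type} (space : T -> Prop)
  (sub : (T -> Prop) -> Prop) : Prop :=
  forall F : (T -> Prop) -> Prop,
    (forall U, F U -> generated_open space sub U) ->
    (forall t, space t -> exists U, F U /\ U t) ->
    exists l : list (T -> Prop),
      (forall U, In U l -> F U) /\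
      (forall t, space t -> exists U, In U l /\ U t).

Definition saturated {P I : Type} (L : form P I -> Prop) (X : pointed P I -> Prop)
  (D : (form P I -> Prop) -> Prop) : Prop :=
  forall Y Y' : (form P I -> Prop) -> Prop,
    (forall c, Y c -> D c) -> (forall c, Y' c -> D c) ->
    let B := fun g => (exists c, Y c /\ c g) \/
                      (exists f, (exists c, Y' c /\ c f) /\ g = Neg f) in
    consistent L B -> exists x, X x /\ forall g, B g -> psat x g.

From Stdlib Require Import List Arith Lia Classical ClassicalEpsilon Cantor.
Import ListNotations.

(* Enumerate the formulas by the naturals (the signature is countable).
   Assuming no finite subcover, decide the members of D one at a time,
   always keeping the half of X that still admits no finite subcover;
   this König-style descent yields a branch of truth values.  Each finite
   part of the branch holds on some point of X, so by soundness the branch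
   is a consistent set of formulas, and by saturation some x realizes it.
   The open set covering the class of x contains a basic neighbourhood
   fixed by finitely many formulas of D, hence contains the whole class
   of points agreeing with the branch up to some stage: a one-set
   subcover of a part that was supposed to have none. *)

Lemma to_nat_inj a b c d :
  Cantor.to_nat (a, b) = Cantor.to_nat (c, d) -> a = c /\ b = d.
Proof.
  intro H. apply (f_equal Cantor.of_nat) in H. rewrite !Cantor.cancel_of_to in H.
  now injection H.
Qed.

Section FormCode.
Variables P I : Type.
Variables (codeP : P -> nat) (codeI : I -> nat).
Hypothesis codeP_inj : forall p q, codeP p = codeP q -> p = q.
Hypothesis codeI_inj : forall i j, codeI i = codeI j -> i = j.

Fixpoint form_code (f : form P I) : nat :=
  match f with
  | Top => Cantor.to_nat (0, 0)
  | Var p => Cantor.to_nat (1, codeP p)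
  | Neg g => Cantor.to_nat (2, form_code g)
  | And g h => Cantor.to_nat (3, Cantor.to_nat (form_code g, form_code h))
  | Box i g => Cantor.to_nat (4, Cantor.to_nat (codeI i, form_code g))
  end.

Lemma form_code_inj f g : form_code f = form_code g -> f = g.
Proof.
  revert g; induction f; destruct g; cbn [form_code]; intro H;
    repeat match goal with
    | H : Cantor.to_nat _ = Cantor.to_nat _ |- _ =>
        apply to_nat_inj in H; destruct H as [? H]
    end; try discriminate; f_equal; auto.
Qed.

End FormCode.

Lemma countable_form (P I : Type) :
  countable P -> countable I -> countable (form P I).
Proof.
  intros [codeP codeP_inj] [codeI codeI_inj].
  exists (form_code P I codeP codeI). exact (form_code_inj _ _ _ _ codeP_inj codeI_inj).
Qed.

Lemma eventually_forall_In {A : Type} (Q : nat -> A -> Prop) (l : list A) :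
  (forall n m a, n <= m -> Q n a -> Q m a) ->
  (forall a, In a l -> exists n, Q n a) ->
  exists n, forall a, In a l -> Q n a.
Proof.
  intros Qmono Hl. induction l as [|a l IH].
  - exists 0. intros a [].
  - destruct (Hl a (or_introl eq_refl)) as [na Ha].
    destruct IH as [nl Hnl]; [intros; apply Hl; now right|].
    exists (Nat.max na nl). intros a' [<-|Ha'].
    + apply (Qmono na); [lia|exact Ha].
    + apply (Qmono nl); [lia|auto].
Qed.

Section Branch.
Context {T : Type} (X : T -> Prop) (test : nat -> T -> Prop).

Definition cylinder (b : nat -> bool) (n : nat) (y : T) : Prop :=
  X y /\ forall k, k < n -> (test k y <-> b k = true).

Lemma cylinder_antitone b n m y : n <= m -> cylinder b m y -> cylinder b n y.
Proof.
  intros Hnm [Hy Hb]. split; [exact Hy|]. intros k Hk. apply Hb. lia.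
Qed.

Variable bad : (T -> Prop) -> Prop.
Hypothesis bad_cover : forall A B C : T -> Prop,
  (forall y, A y -> B y \/ C y) -> bad A -> bad B \/ bad C.

Lemma bad_subset (A B : T -> Prop) : (forall y, A y -> B y) -> bad A -> bad B.
Proof.
  intros HAB HA. destruct (bad_cover A B B) as [H|H]; auto.
Qed.

Definition bool_of_prop (Q : Prop) : bool :=
  if excluded_middle_informative Q then true else false.

Lemma bool_of_prop_spec (Q : Prop) : bool_of_prop Q = true <-> Q.
Proof.
  unfold bool_of_prop. destruct (excluded_middle_informative Q); intuition discriminate.
Qed.

Fixpoint descent (n : nat) : T -> Prop :=
  match n with
  | 0 => X
  | S m => let A := descent m in
      fun y => A y /\ (test m y <-> bool_of_prop (bad (fun z => A z /\ test m z)) = true)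
  end.

Definition descent_branch (n : nat) : bool :=
  bool_of_prop (bad (fun z => descent n z /\ test n z)).

Lemma descent_bad n : bad X -> bad (descent n).
Proof.
  intro HX. induction n as [|n IH]; [exact HX|].
  destruct (classic (bad (fun z => descent n z /\ test n z))) as [Hpos|Hnpos].
  - apply (bad_subset (fun z => descent n z /\ test n z)); [|exact Hpos].
    intros y [Hy Ht]. simpl. split; [exact Hy|].
    split; [intros _; now apply bool_of_prop_spec|tauto].
  - assert (Hneg : bad (fun z => descent n z /\ ~ test n z)).
    { destruct (bad_cover (descent n) (fun z => descent n z /\ test n z)
                  (fun z => descent n z /\ ~ test n z)) as [H|H]; auto.
      - intros y Hy. destruct (classic (test n y)); auto.
      - contradiction. }
    apply (bad_subset (fun z => descent n z /\ ~ test n z)); [|exact Hneg].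
    intros y [Hy Ht]. simpl. split; [exact Hy|].
    rewrite bool_of_prop_spec. tauto.
Qed.

Lemma descent_cylinder n y : descent n y -> cylinder descent_branch n y.
Proof.
  induction n as [|n IH]; intro Hy.
  - split; [exact Hy|]. intros k Hk. lia.
  - destruct Hy as [Hy Ht]. destruct (IH Hy) as [HX Hb].
    split; [exact HX|]. intros k Hk.
    destruct (Nat.eq_dec k n) as [->|Hkn]; [exact Ht|]. apply Hb. lia.
Qed.

Lemma bad_branch : bad X -> exists b, forall n, bad (cylinder b n).
Proof.
  intro HX. exists descent_branch. intro n.
  apply (bad_subset (descent n)); [apply descent_cylinder|now apply descent_bad].
Qed.

End Branch.

Arguments cylinder_antitone {T X test b n m y}.

Section FiniteSubcover.
Context {T S : Type} (F : (S -> Prop) -> Prop) (proj : T -> S).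

Definition no_finite_subcover (A : T -> Prop) : Prop :=
  ~ exists l, (forall U, In U l -> F U) /\
              forall y, A y -> exists U, In U l /\ U (proj y).

Lemma no_finite_subcover_cover (A B C : T -> Prop) :
  (forall y, A y -> B y \/ C y) ->
  no_finite_subcover A -> no_finite_subcover B \/ no_finite_subcover C.
Proof.
  intros HABC HA. apply NNPP. intros Hfin. apply HA.
  apply not_or_and in Hfin as [HB HC]. apply NNPP in HB as [lB [HlB HcovB]].
  apply NNPP in HC as [lC [HlC HcovC]].
  exists (lB ++ lC). split.
  - intros U HU. apply in_app_or in HU as [HU|HU]; auto.
  - intros y Hy. destruct (HABC y Hy) as [Hy'|Hy'];
      [destruct (HcovB y Hy') as [U [HU HUy]]|destruct (HcovC y Hy') as [U [HU HUy]]];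
      exists U; split; auto using in_or_app.
Qed.

Lemma no_finite_subcover_inhabited (A : T -> Prop) :
  no_finite_subcover A -> exists y, A y.
Proof.
  intro HA. apply NNPP. intro Hempty. apply HA. exists []. split; [intros U []|].
  intros y Hy. exfalso. apply Hempty. now exists y.
Qed.

End FiniteSubcover.

Lemma psat_Neg {P I} (y : pointed P I) f : psat y (Neg f) <-> ~ psat y f.
Proof. reflexivity. Qed.

Lemma psat_Iff {P I} (y : pointed P I) f g :
  psat y (Iff f g) -> (psat y f <-> psat y g).
Proof.
  unfold psat, Iff, Imp; simpl. intros [H1 H2].
  split; intro H; apply NNPP; intro; [apply H1|apply H2]; auto.
Qed.

Lemma psat_conj_list {P I} (y : pointed P I) l :
  (forall g, In g l -> psat y g) -> psat y (conj_list l).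
Proof.
  induction l as [|a l IH]; intro H; [exact Logic.I|].
  split; [apply H; now left|apply IH; intros; apply H; now right].
Qed.

Lemma normal_logic_Iff_refl {P I} (L : form P I -> Prop) f :
  normal_logic L -> L (Iff f f).
Proof.
  intros [Htaut _]. apply Htaut. intro v. simpl. now destruct (peval v f).
Qed.

Section Descriptor.
Context {P I : Type} (X : pointed P I -> Prop) (L : form P I -> Prop)
  (D : (form P I -> Prop) -> Prop).

Local Notation "[ x ]" := (xD L X D x).

Lemma xD_agree x y f :
  X y -> [y] = [x] -> D (eqclass L f) -> (psat y f <-> psat x f).
Proof.
  intros Hy Hyx Hf. assert (Hyy : [y] y) by (split; [exact Hy|tauto]).
  rewrite Hyx in Hyy. now apply Hyy.
Qed.

Variable code : form P I -> nat.
Hypothesis code_inj : forall f g, code f = code g -> f = g.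

Definition dtest (n : nat) (y : pointed P I) : Prop :=
  exists f, code f = n /\ D (eqclass L f) /\ psat y f.

Lemma dtest_code f y : D (eqclass L f) -> (dtest (code f) y <-> psat y f).
Proof.
  intro Hf. split.
  - intros [g [Hg [_ Hy]]]. now rewrite <- (code_inj _ _ Hg).
  - intro Hy. now exists f.
Qed.

Local Notation cyl := (cylinder X dtest).

Lemma cylinder_sat b n f y :
  D (eqclass L f) -> code f < n -> cyl b n y -> (psat y f <-> b (code f) = true).
Proof.
  intros Hf Hn [_ Hb]. rewrite <- (dtest_code f y Hf). now apply Hb.
Qed.

Definition branch_pos (b : nat -> bool) (c : form P I -> Prop) : Prop :=
  D c /\ exists f, c = eqclass L f /\ b (code f) = true.

Definition branch_neg (b : nat -> bool) (c : form P I -> Prop) : Prop :=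
  D c /\ exists f, c = eqclass L f /\ b (code f) = false.

Definition branch_type (b : nat -> bool) (g : form P I) : Prop :=
  (exists c, branch_pos b c /\ c g) \/
  (exists f, (exists c, branch_neg b c /\ c f) /\ g = Neg f).

Hypothesis sound : sound_wrt L X.

Lemma branch_type_eventually b g :
  branch_type b g -> exists n, forall y, cyl b n y -> psat y g.
Proof.
  intros [[c [[Hc [f [-> Hbf]]] Hfg]] | [h [[c [[Hc [f [-> Hbf]]] Hfh]] ->]]];
    exists (S (code f)); intros y Hy;
    pose proof (cylinder_sat b _ f y Hc (Nat.lt_succ_diag_r _) Hy) as Hyf.
  - apply (psat_Iff y f g (sound _ Hfg y (proj1 Hy))). now apply Hyf.
  - rewrite psat_Neg, <- (psat_Iff y f h (sound _ Hfh y (proj1 Hy))), Hyf.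
    now rewrite Hbf.
Qed.

Lemma branch_type_consistent b :
  (forall n, exists y, cyl b n y) -> consistent L (branch_type b).
Proof.
  intros Hne [l [Hl Hincons]].
  destruct (eventually_forall_In (fun n g => forall y, cyl b n y -> psat y g) l)
    as [n Hn].
  - intros n m g Hnm Hg y Hy. apply Hg. exact (cylinder_antitone Hnm Hy).
  - intros g Hg. apply branch_type_eventually, Hl, Hg.
  - destruct (Hne n) as [y Hy].
    apply (sound _ Hincons y (proj1 Hy)), psat_conj_list.
    intros g Hg. now apply Hn.
Qed.

Lemma branch_realizer_in_cylinder b x n :
  normal_logic L -> (forall n, exists y, cyl b n y) ->
  X x -> (forall g, branch_type b g -> psat x g) -> cyl b n x.
Proof.
  intros HL Hne Hx Hreal. split; [exact Hx|]. intros k _. split.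
  - intros [f [<- [Hf Hxf]]]. destruct (b (code f)) eqn:Hbf; [reflexivity|].
    exfalso. apply (Hreal (Neg f)); [|exact Hxf].
    right. exists f. split; [|reflexivity].
    exists (eqclass L f). split; [split; [exact Hf|now exists f]|].
    exact (normal_logic_Iff_refl L f HL).
  - (* k codes a formula of D, as the cylinder at stage k+1 is nonempty. *)
    intro Hbk. destruct (Hne (S k)) as [y [_ Hy]].
    destruct (proj2 (Hy k (Nat.lt_succ_diag_r k)) Hbk) as [f [<- [Hf _]]].
    exists f. split; [reflexivity|split; [exact Hf|]].
    apply Hreal. left. exists (eqclass L f).
    split; [split; [exact Hf|now exists f]|].
    exact (normal_logic_Iff_refl L f HL).
Qed.

Lemma subbasic_eventually b x B :
  (forall n, cyl b n x) -> subbasis_D L X D B -> B [x] ->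
  exists n, forall y, cyl b n y -> B [y].
Proof.
  intros Hx [f [Hf [-> | ->]]] [x' [Hx' [Hxx' Hx'f]]];
    exists (S (code f)); intros y Hy; exists y;
    (split; [exact (proj1 Hy)|split; [reflexivity|]]);
    pose proof (cylinder_sat b _ f y Hf (Nat.lt_succ_diag_r _) Hy) as Hyf;
    pose proof (cylinder_sat b _ f x Hf (Nat.lt_succ_diag_r _) (Hx _)) as Hxf;
    pose proof (xD_agree x' x f (proj1 (Hx 0)) Hxx' Hf) as Hxx'f.
  - tauto.
  - rewrite psat_Neg in Hx'f |- *. tauto.
Qed.

Lemma open_eventually b x U :
  (forall n, cyl b n x) -> generated_open (XD L X D) (subbasis_D L X D) U -> U [x] ->
  exists n, forall y, cyl b n y -> U [y].
Proof.
  intros Hx [_ HU] HUx. destruct (HU _ HUx) as [l [Hsub [Hlx Hl]]].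
  destruct (eventually_forall_In (fun n B => forall y, cyl b n y -> B [y]) l)
    as [n Hn].
  - intros n m B Hnm HB y Hy. exact (HB y (cylinder_antitone Hnm Hy)).
  - intros B HB. apply (subbasic_eventually b x B Hx (Hsub B HB) (Hlx B HB)).
  - exists n. intros y Hy. apply Hl; [now exists y; split; [exact (proj1 Hy)|]|].
    intros B HB. now apply Hn.
Qed.

End Descriptor.

Theorem proposition22 (P I : Type)
  (cP : countable P) (iP : inhabited P) (cI : countable I) (iI : inhabited I)
  (X : pointed P I -> Prop) (L : form P I -> Prop)
  (HL : normal_logic L) (Hsound : sound_wrt L X) (Hcomp : compact_logic L)
  (D : (form P I -> Prop) -> Prop) (HD : is_descriptor L D)
  (Hsat : saturated L X D) :
  compact_space (XD L X D) (subbasis_D L X D).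
Proof.
  intros F Fopen Fcover. apply NNPP. intro Hnone.
  destruct (countable_form P I cP cI) as [code code_inj].
  set (test := dtest L D code).
  set (bad := no_finite_subcover F (xD L X D)).
  assert (HX : bad X).
  { intros [l [Hl Hcov]]. apply Hnone. exists l. split; [exact Hl|].
    intros S [y [Hy ->]]. now apply Hcov. }
  destruct (bad_branch X test bad (no_finite_subcover_cover F _) HX) as [b Hb].
  assert (Hne : forall n, exists y, cylinder X test b n y)
    by (intro n; exact (no_finite_subcover_inhabited F _ _ (Hb n))).
  destruct (Hsat (branch_pos L D code b) (branch_neg L D code b)
              (fun c Hc => proj1 Hc) (fun c Hc => proj1 Hc)
              (branch_type_consistent X L D code code_inj Hsound b Hne))
    as [x [Hx Hreal]].
  assert (Hxb : forall n, cylinder X test b n x)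
    by (intro n; exact (branch_realizer_in_cylinder X L D code b x n HL Hne Hx Hreal)).
  destruct (Fcover (xD L X D x)) as [U [HU HUx]]; [now exists x|].
  destruct (open_eventually X L D code code_inj b x U Hxb (Fopen U HU) HUx)
    as [n Hn].
  apply (Hb n). exists [U]. split; [intros U' [<-|[]]; exact HU|].
  intros y Hy. exists U. split; [now left|now apply Hn].
Qed.
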